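(* Assume (H1'), let $\phi$ be a sub-additive admissible policy, $r\in\mathbb N_+$, and $z^1,\dots,z^r$ (possibly identical) strong erasing words for $(G,\phi)$, with $m=\sum_{i=1}^r|z^i|/2$. Let $$\mathscr B^r(z^1,\dots,z^r)=\{V^0V^1\,V^0\circ\theta\,V^1\circ\theta\cdots V^0\circ\theta^{m-1}V^1\circ\theta^{m-1}=z^1z^2\cdots z^r\},\qquad \mathscr C^r_n=\mathscr A_n(\emptyset)\cap\theta^{-n}\mathscr B^r(z^1,\dots,z^r).$$ Then for every $Y\in\mathscr Y_2^r$ and every $n\ge1$, $\mathscr C^r_n\subset\mathscr A_{n+m}(Y)$ up to a $\mathbb P^0$-null set.
   Context: $G=(\mathcal V,\mathcal E)$ finite connected simple graph; $\mathcal S$ the set of lists of preferences (for each class a linear ordering of its neighbours); $\phi$ a policy with probability $\nu_\phi$ on $\mathcal S$; $\mathbb W=\{w\in\mathcal V^*:|w|_i|w|_j=0\text{ whenever } i,j\text{ adjacent}\}$, $\mathbb W_2$ its even-length words; admissible $\phi$: map $\odot_\phi$ with $w\odot_\phi(v,\sigma)=wv$ if no letter of $w$ is adjacent to $v$, else $w$ with one letter adjacent to $v$ (chosen by $\phi$) deleted; $Q_\phi(z_1\cdots z_k,\varsigma_1\cdots\varsigma_k)=(\cdots(\emptyset\odot_\phi(z_1,\varsigma_1))\cdots)\odot_\phi(z_k,\varsigma_k)$. Sub-additive: $|Q_\phi(z'z'',\varsigma'\varsigma'')|\le|Q_\phi(z',\varsigma')|+|Q_\phi(z'',\varsigma'')|$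 for all words with preferences in the support of $\nu_\phi$. Strong erasing word: $z$ of even length $2p$ such that $Q_\phi(ijz,\varsigma\varsigma')=\emptyset$ for all non-adjacent $i,j$ (possibly equal) and $Q_\phi(z_{2\ell+1}\cdots z_{2p},\varsigma'_{2\ell+1}\cdots\varsigma'_{2p})=\emptyset$ for $\ell=0,\dots,p-1$, for all preference words with letters in the support of $\nu_\phi$. (H1'): $(V_{2n},\Sigma_{2n},V_{2n+1},\Sigma_{2n+1})_{n\in\mathbb Z}$ stationary ergodic with $V_{2n}\sim\mu^0$, $V_{2n+1}\sim\mu^1$, $\Sigma_m\sim\nu_\phi$, $(\mu^0+\mu^1)/2$ of full support; canonical space $\Omega^0$ with law $\mathbb P^0$, shift $\theta$, and $0$-coordinate $(V^0,\Sigma^0,V^1,\Sigma^1)$. $U^{[Y]}_0=Y$, $U^{[Y]}_{n+1}=(U^{[Y]}_n\odot_\phi(V^0\circ\theta^n,\Sigma^0\circ\theta^n))\odot_\phi(V^1\circ\theta^n,\Sigma^1\circ\theta^n)$; $\mathscr A_n(Y)=\{U^{[Y]}_n=\emptyset\}$. $\mathscr Y_2^r$ is the set of $\mathbb W_2$-valued r.v.'s $Y$ with $|Y|\le2r$ a.s. *)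

From Stdlib Require Import Reals List Arith ZArith Relations.
Import ListNotations.
Set Implicit Arguments.

Section Defs.
Variable V : Type.
Variable eqdec : forall x y : V, {x = y} + {x <> y}.
Variable adj : V -> V -> Prop.

Definition simple_finite_connected_graph : Prop :=
  (exists l : list V, forall v, In v l) /\
  (forall i j, adj i j -> adj j i) /\
  (forall i, ~ adj i i) /\
  (forall i j, clos_refl_trans V adj i j).

(** a list of preferences: for each class i a linear ordering (a duplicate-free
    list) of its neighbours *)
Definition valid_pref (s : V -> list V) : Prop :=
  forall i, NoDup (s i) /\ (forall j, In j (s i) <-> adj i j).

Definition Pref : Type := { s : V -> list V | valid_pref s }.

Definition inW (w : list V) : Prop :=
  forall i j, adj i j -> (count_occ eqdec w i * count_occ eqdec w j = 0)%nat.

Definition inW2 (w : list V) : Prop := inW w /\ Nat.Even (length w).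

Definition admissible (odot : list V -> V -> Pref -> list V) : Prop :=
  forall w v s, inW w ->
    ((forall u, In u w -> ~ adj u v) -> odot w v s = w ++ [v]) /\
    ((exists u, In u w /\ adj u v) ->
       exists k, (k < length w)%nat /\ adj (nth k w v) v /\
                 odot w v s = firstn k w ++ skipn (S k) w).

Definition Qphi (odot : list V -> V -> Pref -> list V)
  (z : list V) (sg : list Pref) : list V :=
  fold_left (fun w p => odot w (fst p) (snd p)) (combine z sg) [].

Definition in_supp (nu : Pref -> R) (s : Pref) : Prop := (0 < nu s)%R.

Definition all_in_supp (nu : Pref -> R) (sg : list Pref) : Prop :=
  forall s, In s sg -> in_supp nu s.

Definition sub_additive (odot : list V -> V -> Pref -> list V) (nu : Pref -> R) : Prop :=
  forall z' z'' sg' sg'',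
    length z' = length sg' -> length z'' = length sg'' ->
    all_in_supp nu (sg' ++ sg'') ->
    (length (Qphi odot (z' ++ z'') (sg' ++ sg''))
       <= length (Qphi odot z' sg') + length (Qphi odot z'' sg''))%nat.

Definition strong_erasing (odot : list V -> V -> Pref -> list V) (nu : Pref -> R)
  (z : list V) : Prop :=
  exists p : nat, length z = (2 * p)%nat /\
    forall (i j : V) (sg sg' : list Pref),
      ~ adj i j -> length sg = 2%nat -> length sg' = (2 * p)%nat ->
      all_in_supp nu sg -> all_in_supp nu sg' ->
      Qphi odot (i :: j :: z) (sg ++ sg') = [] /\
      (forall l, (l < p)%nat ->
         Qphi odot (skipn (2 * l) z) (skipn (2 * l) sg') = []).

Record coord : Type := Coord { cV0 : V; cS0 : Pref; cV1 : V; cS1 : Pref }.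

Definition Omega0 : Type := Z -> coord.

Definition theta (om : Omega0) : Omega0 := fun k => om (k + 1)%Z.
Definition thetan (n : nat) (om : Omega0) : Omega0 := Nat.iter n theta om.

Definition V0 (om : Omega0) : V := cV0 (om 0%Z).
Definition Sg0 (om : Omega0) : Pref := cS0 (om 0%Z).
Definition V1 (om : Omega0) : V := cV1 (om 0%Z).
Definition Sg1 (om : Omega0) : Pref := cS1 (om 0%Z).

Definition sigma_algebra {T : Type} (F : (T -> Prop) -> Prop) : Prop :=
  F (fun _ => True) /\
  (forall E, F E -> F (fun t => ~ E t)) /\
  (forall E : nat -> T -> Prop, (forall n, F (E n)) -> F (fun t => exists n, E n t)).

Definition measurable (E : Omega0 -> Prop) : Prop :=
  forall F : (Omega0 -> Prop) -> Prop, sigma_algebra F ->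
    (forall (k : Z) (c : coord), F (fun om => om k = c)) -> F E.

Definition probability (P : (Omega0 -> Prop) -> R) : Prop :=
  P (fun _ => True) = 1%R /\
  (forall E, measurable E -> (0 <= P E)%R) /\
  (forall E : nat -> Omega0 -> Prop,
     (forall n, measurable (E n)) ->
     (forall n m om, n <> m -> E n om -> E m om -> False) ->
     infinite_sum (fun n => P (E n)) (P (fun om => exists n, E n om))).

Definition H1' (P : (Omega0 -> Prop) -> R) (mu0 mu1 : V -> R) (nu : Pref -> R) : Prop :=
  probability P /\
  (forall E, measurable E -> P (fun om => E (theta om)) = P E) /\
  (forall E, measurable E -> (forall om, E (theta om) <-> E om) ->
     P E = 0%R \/ P E = 1%R) /\
  (* marginals: V_{2n} ~ mu0, V_{2n+1} ~ mu1, Sigma_m ~ nu *)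
  (forall (k : Z) v, P (fun om => cV0 (om k) = v) = mu0 v) /\
  (forall (k : Z) v, P (fun om => cV1 (om k) = v) = mu1 v) /\
  (forall (k : Z) s, P (fun om => cS0 (om k) = s) = nu s) /\
  (forall (k : Z) s, P (fun om => cS1 (om k) = s) = nu s) /\
  (forall v, (0 < (mu0 v + mu1 v) / 2)%R).

Fixpoint U (odot : list V -> V -> Pref -> list V) (Y : Omega0 -> list V)
  (n : nat) (om : Omega0) : list V :=
  match n with
  | O => Y om
  | S n' =>
      let w := U odot Y n' om in
      let om' := thetan n' om in
      odot (odot w (V0 om') (Sg0 om')) (V1 om') (Sg1 om')
  end.

Definition Aev (odot : list V -> V -> Pref -> list V) (Y : Omega0 -> list V)
  (n : nat) (om : Omega0) : Prop := U odot Y n om = [].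

Definition Bev (zs : list (list V)) (m : nat) (om : Omega0) : Prop :=
  flat_map (fun k => [V0 (thetan k om); V1 (thetan k om)]) (seq 0 m) = concat zs.

Definition half_total_length (zs : list (list V)) : nat :=
  Nat.div (list_sum (map (@length V) zs)) 2.

Definition Cev (odot : list V -> V -> Pref -> list V) (zs : list (list V))
  (n : nat) (om : Omega0) : Prop :=
  Aev odot (fun _ => []) n om /\ Bev zs (half_total_length zs) (thetan n om).

Definition null (P : (Omega0 -> Prop) -> R) (N : Omega0 -> Prop) : Prop :=
  measurable N /\ P N = 0%R.

Definition subset_ae (P : (Omega0 -> Prop) -> R) (E F : Omega0 -> Prop) : Prop :=
  exists N, null P N /\ forall om, E om -> ~ N om -> F om.

Definition in_Y2r (P : (Omega0 -> Prop) -> R) (r : nat) (Y : Omega0 -> list V) : Prop :=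
  (forall w, measurable (fun om => Y om = w)) /\
  (forall om, inW2 (Y om)) /\
  (exists N, null P N /\ forall om, ~ N om -> (length (Y om) <= 2 * r)%nat).

End Defs.

(* On C_n the trajectory started from the empty word is empty at time n, and the next m
   pairs of letters spell z^1 ... z^r.  By sub-additivity the trajectory started from Y then
   satisfies |U^Y_n| <= |Y| + |U^0_n| = |Y| <= 2r, and U^Y_n is an even-length word of W.
   Appending a strong erasing word to such a word w'ij deletes the pair ij and, again by
   sub-additivity, leaves at most |w'| letters; so z^1, ..., z^r erase U^Y_n by time n + m.
   The argument needs |Y| <= 2r and all preference lists read before time n + m to lie in
   the support of nu; both fail only on null sets, the second because there are finitely
   many preference lists. *)

From Stdlib Require Import Reals List ZArith Lia Lra.
From Stdlib Require Import Classical ClassicalEpsilon FunctionalExtensionality PropExtensionality.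
From Stdlib Require Import FinFun.
Import ListNotations.

Lemma combine_app {A B : Type} (a1 a2 : list A) (b1 b2 : list B) :
  length a1 = length b1 -> combine (a1 ++ a2) (b1 ++ b2) = combine a1 b1 ++ combine a2 b2.
Proof.
  revert b1; induction a1 as [|x a1 IH]; intros [|y b1] Hlen; try discriminate; simpl; auto.
  rewrite IH; auto.
Qed.

Lemma all_in_supp_app {V : Type} {adj : V -> V -> Prop} (nu : Pref adj -> R)
  (a b : list (Pref adj)) :
  all_in_supp nu (a ++ b) <-> all_in_supp nu a /\ all_in_supp nu b.
Proof.
  split.
  - intros H; split; intros x Hx; apply H, in_or_app; auto.
  - intros [Ha Hb] x Hx; apply in_app_or in Hx as [Hx|Hx]; auto.
Qed.

Lemma even_length_last_two {A : Type} (w : list A) :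
  Nat.Even (length w) -> w = [] \/ exists w' i j, w = w' ++ [i; j].
Proof.
  intros Hev. destruct (rev w) as [|j [|i t]] eqn:Erev.
  - left. apply (f_equal (@rev A)) in Erev. now rewrite rev_involutive in Erev.
  - exfalso. apply (f_equal (@length A)) in Erev. rewrite length_rev in Erev.
    destruct Hev as [k Hk]. simpl in Erev. lia.
  - right. exists (rev t), i, j.
    rewrite <- (rev_involutive w), Erev. simpl. now rewrite <- app_assoc.
Qed.

Section Policy.
Context {V : Type} (eqdec : forall x y : V, {x = y} + {x <> y}) {adj : V -> V -> Prop}
  (odot : list V -> V -> Pref adj -> list V).

Definition Qphi_from (w z : list V) (s : list (Pref adj)) : list V :=
  fold_left (fun w p => odot w (fst p) (snd p)) (combine z s) w.

Lemma Qphi_from_app w z1 z2 s1 s2 : length z1 = length s1 ->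
  Qphi_from w (z1 ++ z2) (s1 ++ s2) = Qphi_from (Qphi_from w z1 s1) z2 s2.
Proof. intros Hlen. unfold Qphi_from. rewrite combine_app by auto. apply fold_left_app. Qed.

Lemma inW_app_l a b : inW eqdec adj (a ++ b) -> inW eqdec adj a.
Proof. intros H i j Hij. specialize (H i j Hij). rewrite !count_occ_app in H. nia. Qed.

Lemma count_occ_delete (l : list V) k x :
  count_occ eqdec (firstn k l ++ skipn (S k) l) x <= count_occ eqdec l x.
Proof.
  revert k; induction l as [|a l IH]; intros [|k]; simpl; try lia.
  - destruct (eqdec a x); lia.
  - specialize (IH k). destruct (eqdec a x); destruct l; simpl in *; lia.
Qed.

Hypothesis Hadm : admissible eqdec odot.

Lemma Qphi_from_conflict_free w z s : inW eqdec adj (w ++ z) -> length s = length z ->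
  Qphi_from w z s = w ++ z.
Proof.
  revert w s; induction z as [|a z IH]; intros w [|s0 s] HW Hlen; try discriminate.
  - now rewrite app_nil_r.
  - unfold Qphi_from; simpl; fold (Qphi_from (odot w a s0) z s).
    destruct (Hadm w a s0 (inW_app_l w _ HW)) as [Happend _].
    rewrite Happend.
    + rewrite IH; [now rewrite <- app_assoc | now rewrite <- app_assoc | now injection Hlen].
    + intros u Hu Hua. specialize (HW u a Hua). rewrite !count_occ_app in HW.
      apply (count_occ_In eqdec) in Hu. simpl in HW.
      destruct (eqdec a a); [lia | congruence].
Qed.

Hypothesis Hsym : forall i j, adj i j -> adj j i.
Hypothesis Hirr : forall i, ~ adj i i.

Lemma odot_inW w v s : inW eqdec adj w ->
  inW eqdec adj (odot w v s) /\ Nat.even (length (odot w v s)) = negb (Nat.even (length w)).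
Proof.
  intros HW. destruct (Hadm w v s HW) as [Happend Hdelete].
  destruct (classic (exists u, In u w /\ adj u v)) as [Hconf|Hfree].
  - destruct (Hdelete Hconf) as [k [Hk [_ ->]]]. split.
    + intros i j Hij. specialize (HW i j Hij).
      pose proof (count_occ_delete w k i). pose proof (count_occ_delete w k j). nia.
    + rewrite length_app, length_firstn, length_skipn.
      destruct (length w) as [|n]; [lia|].
      rewrite Nat.even_succ, <- Nat.negb_even, Bool.negb_involutive. f_equal. lia.
  - assert (Hnot : forall u, In u w -> ~ adj u v) by (intros u Hu Huv; eauto).
    rewrite (Happend Hnot). split.
    + intros i j Hij. rewrite !count_occ_app. simpl.
      destruct (eqdec v i) as [<-|Hvi]; destruct (eqdec v j) as [<-|Hvj].
      * exfalso; eapply Hirr; eauto.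
      * rewrite (proj1 (count_occ_not_In eqdec w j)) by (intros Hj; eapply Hnot; eauto). lia.
      * rewrite (proj1 (count_occ_not_In eqdec w i)) by (intros Hi; eapply Hnot; eauto). lia.
      * specialize (HW i j Hij). lia.
    + rewrite length_app, Nat.add_1_r, Nat.even_succ, <- Nat.negb_even. reflexivity.
Qed.

Lemma Qphi_from_inW w z s : inW eqdec adj w -> length z = length s ->
  inW eqdec adj (Qphi_from w z s) /\
  Nat.even (length (Qphi_from w z s) + length z) = Nat.even (length w).
Proof.
  revert w s; induction z as [|a z IH]; intros w [|s0 s] HW Hlen; try discriminate.
  - now rewrite Nat.add_0_r.
  - unfold Qphi_from; simpl; fold (Qphi_from (odot w a s0) z s).
    destruct (odot_inW w a s0 HW) as [HW' Hpar].
    destruct (IH _ s HW' ltac:(now injection Hlen)) as [HWz Hparz].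
    split; auto.
    rewrite Nat.add_succ_r, Nat.even_succ, <- Nat.negb_even, Hparz, Hpar.
    apply Bool.negb_involutive.
Qed.

Lemma Qphi_from_inW2 w z s : inW2 eqdec adj w -> Nat.Even (length z) -> length z = length s ->
  inW2 eqdec adj (Qphi_from w z s).
Proof.
  intros [HW Hw] Hz Hlen. destruct (Qphi_from_inW w z s HW Hlen) as [HWz Hpar].
  split; auto. apply Nat.even_spec in Hw, Hz.
  apply Nat.even_spec. rewrite Nat.even_add, Hz, Hw in Hpar.
  destruct (Nat.even (length (Qphi_from w z s))); auto.
Qed.

Variable nu : Pref adj -> R.
Hypothesis Hsub : sub_additive odot nu.

(* Being conflict-free, [w] is its own image under [Qphi], so sub-additivity applies. *)
Lemma Qphi_from_length_le s0 w z s : in_supp nu s0 -> inW eqdec adj w ->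
  length z = length s -> all_in_supp nu s ->
  length (Qphi_from w z s) <= length w + length (Qphi odot z s).
Proof.
  intros Hs0 HW Hlen Hs.
  set (sw := repeat s0 (length w)).
  assert (Hsw : length w = length sw) by (symmetry; apply repeat_length).
  assert (Ew : Qphi odot w sw = w).
  { apply (Qphi_from_conflict_free [] w sw); auto. }
  rewrite <- Ew at 1.
  change (Qphi odot w sw) with (Qphi_from [] w sw).
  rewrite <- Qphi_from_app by auto.
  rewrite <- Ew at 2. apply Hsub; auto.
  apply all_in_supp_app; split; auto.
  intros x Hx. apply repeat_spec in Hx. now subst.
Qed.

Lemma strong_erasing_shortens s0 z w s : in_supp nu s0 -> strong_erasing odot nu z ->
  inW2 eqdec adj w -> length s = length z -> all_in_supp nu s ->
  length (Qphi_from w z s) <= length w - 2.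
Proof.
  intros Hs0 [p [Hzp Herase]] [HW Hw] Hlen Hs.
  assert (Hss : all_in_supp nu [s0; s0]) by (intros x [<-|[<-|[]]]; auto).
  destruct (even_length_last_two w Hw) as [->|[w' [i [j ->]]]].
  - destruct z as [|a z']; [now destruct s|].
    destruct p as [|p]; [discriminate|].
    destruct (Herase a a [s0; s0] s (Hirr a) eq_refl ltac:(congruence) Hss Hs) as [_ Hsuffix].
    change (Qphi_from [] (a :: z') s) with (Qphi odot (skipn (2 * 0) (a :: z')) (skipn (2 * 0) s)).
    rewrite Hsuffix by lia. simpl; lia.
  - assert (Hij : ~ adj i j).
    { intros Hadj. specialize (HW i j Hadj). rewrite !count_occ_app in HW. simpl in HW.
      destruct (eqdec i i), (eqdec j j), (eqdec i j); try congruence; lia. }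
    assert (HW' : inW eqdec adj w') by (eapply inW_app_l; eauto).
    destruct (Herase i j [s0; s0] s Hij eq_refl ltac:(congruence) Hss Hs) as [Hpair _].
    rewrite <- (Qphi_from_conflict_free w' [i; j] [s0; s0]) at 1 by auto.
    rewrite <- Qphi_from_app by reflexivity.
    eapply Nat.le_trans.
    + apply (Qphi_from_length_le s0); auto.
      * simpl; congruence.
      * apply all_in_supp_app; auto.
    + simpl in Hpair |- *. rewrite Hpair, length_app. simpl. lia.
Qed.

Lemma concat_strong_erasing_erases s0 zs w s : in_supp nu s0 ->
  (forall z, In z zs -> strong_erasing odot nu z) ->
  inW2 eqdec adj w -> length w <= 2 * length zs ->
  length s = length (concat zs) -> all_in_supp nu s ->
  Qphi_from w (concat zs) s = [].
Proof.
  intros Hs0. revert w s; induction zs as [|z zs IH]; intros w s Hzs Hw Hwlen Hlen Hs.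
  - destruct w; [now destruct s | simpl in Hwlen; lia].
  - simpl concat in *. rewrite length_app in Hlen.
    rewrite <- (firstn_skipn (length z) s) in Hs |- *.
    apply all_in_supp_app in Hs as [Hs1 Hs2].
    assert (Hl1 : length (firstn (length z) s) = length z) by (rewrite length_firstn; lia).
    assert (Hl2 : length (skipn (length z) s) = length (concat zs)) by (rewrite length_skipn; lia).
    assert (Hz : strong_erasing odot nu z) by (apply Hzs; now left).
    rewrite Qphi_from_app by auto.
    apply IH; auto.
    + intros; apply Hzs; now right.
    + apply Qphi_from_inW2; auto.
      destruct Hz as [p [Hp _]]. exists p. lia.
    + pose proof (strong_erasing_shortens s0 z w _ Hs0 Hz Hw Hl1 Hs1). simpl in Hwlen. lia.
Qed.

End Policy.

Section Trajectory.
Context {V : Type} {adj : V -> V -> Prop}.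

Definition letters (om : Omega0 adj) (a b : nat) : list V :=
  flat_map (fun k => [V0 (thetan k om); V1 (thetan k om)]) (seq a b).

Definition prefs (om : Omega0 adj) (a b : nat) : list (Pref adj) :=
  flat_map (fun k => [Sg0 (thetan k om); Sg1 (thetan k om)]) (seq a b).

Lemma length_letters (om : Omega0 adj) a b : length (letters om a b) = 2 * b.
Proof.
  unfold letters. induction b as [|b IH]; auto.
  rewrite seq_S, flat_map_app, length_app, IH. simpl. lia.
Qed.

Lemma length_prefs (om : Omega0 adj) a b : length (prefs om a b) = 2 * b.
Proof.
  unfold prefs. induction b as [|b IH]; auto.
  rewrite seq_S, flat_map_app, length_app, IH. simpl. lia.
Qed.

Lemma letters_add (om : Omega0 adj) a b c :
  letters om a (b + c) = letters om a b ++ letters om (a + b) c.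
Proof. unfold letters. now rewrite seq_app, flat_map_app. Qed.

Lemma prefs_add (om : Omega0 adj) a b c :
  prefs om a (b + c) = prefs om a b ++ prefs om (a + b) c.
Proof. unfold prefs. now rewrite seq_app, flat_map_app. Qed.

Lemma thetan_add (om : Omega0 adj) k n : thetan k (thetan n om) = thetan (k + n) om.
Proof. unfold thetan. now rewrite Nat.iter_add. Qed.

Lemma thetan_coord (om : Omega0 adj) k j : thetan k om j = om (j + Z.of_nat k)%Z.
Proof.
  revert j; induction k as [|k IH]; intros j.
  - simpl. f_equal. lia.
  - change (thetan (S k) om) with (theta (thetan k om)). unfold theta.
    rewrite IH. f_equal. lia.
Qed.

Lemma letters_thetan (om : Omega0 adj) n a b : letters (thetan n om) a b = letters om (a + n) b.
Proof.
  unfold letters. induction b as [|b IH]; auto.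
  rewrite !seq_S, !flat_map_app, IH. simpl. rewrite !thetan_add.
  now replace (a + b + n) with (a + n + b) by lia.
Qed.

Lemma Bev_letters zs m n (om : Omega0 adj) : Bev zs m (thetan n om) -> letters om n m = concat zs.
Proof. intros HB. exact (eq_trans (eq_sym (letters_thetan om n 0 m)) HB). Qed.

Lemma U_Qphi_from (odot : list V -> V -> Pref adj -> list V) Y n om :
  U odot Y n om = Qphi_from odot (Y om) (letters om 0 n) (prefs om 0 n).
Proof.
  induction n as [|n IH]; auto.
  simpl U. rewrite IH, <- Nat.add_1_r, letters_add, prefs_add, Qphi_from_app
    by now rewrite length_letters, length_prefs.
  reflexivity.
Qed.

Lemma U_add (odot : list V -> V -> Pref adj -> list V) Y n m om :
  U odot Y (n + m) om = Qphi_from odot (U odot Y n om) (letters om n m) (prefs om n m).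
Proof.
  rewrite !U_Qphi_from, letters_add, prefs_add, Qphi_from_app
    by now rewrite length_letters, length_prefs.
  reflexivity.
Qed.

End Trajectory.

Lemma U_inW2 {V : Type} (eqdec : forall x y : V, {x = y} + {x <> y}) {adj : V -> V -> Prop}
  (odot : list V -> V -> Pref adj -> list V) (Hadm : admissible eqdec odot)
  (Hsym : forall i j, adj i j -> adj j i) (Hirr : forall i, ~ adj i i) Y n om :
  inW2 eqdec adj (Y om) -> inW2 eqdec adj (U odot Y n om).
Proof.
  intros HY. rewrite U_Qphi_from.
  apply Qphi_from_inW2; auto.
  - rewrite length_letters. now exists n.
  - now rewrite length_letters, length_prefs.
Qed.

Fixpoint lists_upto {A : Type} (L : list A) (n : nat) : list (list A) :=
  match n with
  | O => [[]]
  | S n => [] :: flat_map (fun x => map (cons x) (lists_upto L n)) L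
  end.

Lemma In_lists_upto {A : Type} (L : list A) n l : Full L -> length l <= n ->
  In l (lists_upto L n).
Proof.
  intros HL. revert l; induction n as [|n IH]; intros [|a l] Hl; simpl in *; auto; try lia.
  right. apply in_flat_map. exists a. split; auto. apply in_map, IH. lia.
Qed.

Fixpoint functions_on {A B : Type} (eqdec : forall x y : A, {x = y} + {x <> y}) (b0 : B)
  (LL : list B) (K : list A) : list (A -> B) :=
  match K with
  | [] => [fun _ => b0]
  | a :: K => flat_map (fun b => map (fun g x => if eqdec x a then b else g x)
                                    (functions_on eqdec b0 LL K)) LL
  end.

Lemma functions_on_agree {A B : Type} (eqdec : forall x y : A, {x = y} + {x <> y}) b0
  (LL : list B) (f : A -> B) : (forall x, In (f x) LL) ->
  forall K, exists g, In g (functions_on eqdec b0 LL K) /\ forall x, In x K -> g x = f x.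
Proof.
  intros Hf. induction K as [|a K [g [Hg Hgf]]].
  - exists (fun _ => b0). split; [now left | intros x []].
  - exists (fun x => if eqdec x a then f a else g x). split.
    + apply in_flat_map. exists (f a). split; auto.
      apply in_map with (f := fun g x => if eqdec x a then f a else g x). auto.
    + intros x Hx. destruct (eqdec x a) as [->|Hne]; auto.
      destruct Hx as [->|Hx]; [congruence | auto].
Qed.

Lemma functions_into_list_enumerable {A B : Type} (eqdec : forall x y : A, {x = y} + {x <> y})
  (b0 : B) (LL : list B) : Finite A ->
  exists lf : list (A -> B), forall f, (forall x, In (f x) LL) -> In f lf.
Proof.
  intros [K HK]. exists (functions_on eqdec b0 LL K). intros f Hf.
  destruct (functions_on_agree eqdec b0 LL f Hf K) as [g [Hg Hgf]].
  replace f with g; auto. apply functional_extensionality. auto.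
Qed.

Lemma Finite_sig {A : Type} (Q : A -> Prop) (l : list A) :
  (forall x, Q x -> In x l) -> Finite {x | Q x}.
Proof.
  intros Hl.
  exists (flat_map (fun x => match excluded_middle_informative (Q x) with
                          | left q => [exist Q x q] | right _ => [] end) l).
  intros [x q]. apply in_flat_map. exists x. split; auto.
  destruct (excluded_middle_informative (Q x)) as [q'|nq]; [|contradiction].
  rewrite (proof_irrelevance _ q q'). now left.
Qed.

Lemma Finite_Pref {V : Type} (eqdec : forall x y : V, {x = y} + {x <> y}) (adj : V -> V -> Prop) :
  Finite V -> Finite (Pref adj).
Proof.
  intros HV. pose proof HV as [L HL].
  destruct (functions_into_list_enumerable eqdec [] (lists_upto L (length L)) HV) as [lf Hlf].
  apply (Finite_sig _ lf). intros s Hs. apply Hlf. intros x.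
  apply In_lists_upto; auto. apply NoDup_incl_length; [apply Hs | intros y _; apply HL].
Qed.

Lemma Finite_coord {V : Type} (adj : V -> V -> Prop) :
  Finite V -> Finite (Pref adj) -> Finite (coord adj).
Proof.
  intros [L HL] [lp Hlp].
  exists (flat_map (fun a => flat_map (fun s => flat_map (fun b =>
            map (fun t => Coord a s b t) lp) L) lp) L).
  intros [a s b t].
  apply in_flat_map; exists a; split; auto. apply in_flat_map; exists s; split; auto.
  apply in_flat_map; exists b; split; auto. now apply in_map.
Qed.

Lemma pred_ext {T : Type} (E E' : T -> Prop) : (forall x, E x <-> E' x) -> E = E'.
Proof.
  intros H. apply functional_extensionality; intros x. apply propositional_extensionality, H.
Qed.

Lemma pred_ext_subst {T : Type} (F : (T -> Prop) -> Prop) {A : T -> Prop} (B : T -> Prop) :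
  F B -> (forall x, A x <-> B x) -> F A.
Proof. intros HB H. now rewrite (pred_ext A B H). Qed.

Section SigmaAlgebra.
Context {T : Type} (F : (T -> Prop) -> Prop) (HF : sigma_algebra F).

Lemma sigma_algebra_empty : F (fun _ => False).
Proof.
  destruct HF as [Htrue [Hcompl _]].
  rewrite (pred_ext (fun _ => False) (fun t => ~ (fun _ => True) t)) by (intros; tauto). auto.
Qed.

Lemma sigma_algebra_union A B : F A -> F B -> F (fun t => A t \/ B t).
Proof.
  intros HA HB. destruct HF as [_ [_ Hunion]].
  apply (pred_ext_subst F (fun t => exists n, (fun n => match n with 0 => A | _ => B end) n t)).
  - apply Hunion. intros [|n]; auto.
  - intros t; split.
    + intros [H|H]; [exists 0 | exists 1]; auto.
    + intros [[|n] H]; auto.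
Qed.

Lemma sigma_algebra_inter A B : F A -> F B -> F (fun t => A t /\ B t).
Proof.
  intros HA HB. destruct HF as [_ [Hcompl _]].
  apply (pred_ext_subst F (fun t => ~ (fun t => ~ A t \/ ~ B t) t)); [|intros; tauto].
  apply Hcompl, sigma_algebra_union; auto.
Qed.

Lemma sigma_algebra_list_union {X : Type} (A : X -> T -> Prop) (l : list X) :
  (forall x, In x l -> F (A x)) -> F (fun t => exists x, In x l /\ A x t).
Proof.
  induction l as [|a l IH]; intros Hl.
  - apply (pred_ext_subst F _ sigma_algebra_empty). firstorder.
  - apply (pred_ext_subst F (fun t => A a t \/ exists x, In x l /\ A x t)).
    + apply sigma_algebra_union; [apply Hl; now left | apply IH; intros; apply Hl; now right].
    + intros t; split.
      * intros [x [[<-|Hx] HA]]; [left | right; exists x]; auto.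
      * intros [HA|[x [Hx HA]]]; [exists a | exists x]; simpl; auto.
Qed.

End SigmaAlgebra.

Lemma infinite_sum_const (c l : R) : infinite_sum (fun _ => c) l -> c = 0%R.
Proof.
  intros Hsum. destruct (Req_dec c 0) as [|Hc]; auto. exfalso.
  destruct (Hsum (Rabs c / 2)%R) as [N HN].
  { apply Rdiv_lt_0_compat; [now apply Rabs_pos_lt | lra]. }
  pose proof (HN N (le_n N)) as H1. pose proof (HN (S N) (le_S _ _ (le_n N))) as H2.
  unfold R_dist in H1, H2. rewrite !sum_cte in H1, H2.
  rewrite (S_INR (S N)) in H2.
  pose proof (Rabs_triang (c * (INR (S N) + 1) - l) (- (c * INR (S N) - l))) as Htri.
  rewrite Rabs_Ropp in Htri.
  replace (c * (INR (S N) + 1) - l + - (c * INR (S N) - l))%R with c in Htri by ring.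
  lra.
Qed.

Section Probability.
Context {V : Type} {adj : V -> V -> Prop}.

Lemma sigma_algebra_measurable : sigma_algebra (@measurable V adj).
Proof.
  split; [|split].
  - intros F HF _. apply HF.
  - intros E HE F HF Hcyl. apply HF, HE; auto.
  - intros E HE F HF Hcyl. apply HF. intros n. apply HE; auto.
Qed.

Lemma measurable_coord (k : Z) (Q : coord adj -> Prop) :
  Finite (coord adj) -> measurable (fun om : Omega0 adj => Q (om k)).
Proof.
  intros [lc Hlc].
  apply (pred_ext_subst (@measurable V adj) (fun om => exists c, In c lc /\ (Q c /\ om k = c))).
  - apply (sigma_algebra_list_union _ sigma_algebra_measurable). intros c _.
    destruct (classic (Q c)) as [Hq|Hq].
    + apply (pred_ext_subst (@measurable V adj) (fun om : Omega0 adj => om k = c)); [|tauto].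
      intros F _ Hcyl. apply Hcyl.
    + apply (pred_ext_subst (@measurable V adj) (fun _ => False)); [|tauto].
      apply sigma_algebra_empty, sigma_algebra_measurable.
  - intros om; split.
    + intros Hq. exists (om k). auto.
    + now intros [c [_ [Hq ->]]].
Qed.

Variable P : (Omega0 adj -> Prop) -> R.
Hypothesis HP : probability P.

Lemma P_ext A B : (forall om, A om <-> B om) -> P A = P B.
Proof. intros H. now rewrite (pred_ext A B H). Qed.

Lemma P_empty : P (fun _ => False) = 0%R.
Proof.
  destruct HP as [_ [_ Hadd]].
  exact (infinite_sum_const _ _ (Hadd (fun _ _ => False)
           (fun _ => sigma_algebra_empty _ sigma_algebra_measurable) (fun _ _ _ _ H _ => H))).
Qed.

Lemma P_disjoint_union A B : measurable A -> measurable B ->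
  (forall om, A om -> B om -> False) -> P (fun om => A om \/ B om) = (P A + P B)%R.
Proof.
  intros HA HB Hdisj. destruct HP as [_ [_ Hadd]].
  set (E := fun n : nat => match n with 0 => A | 1 => B | _ => fun _ => False end).
  assert (HE : forall n, measurable (E n)).
  { intros [|[|n]]; auto. apply sigma_algebra_empty, sigma_algebra_measurable. }
  assert (HEdisj : forall n m om, n <> m -> E n om -> E m om -> False).
  { intros [|[|n]] [|[|m]] om Hnm; simpl; try tauto; try congruence; eauto. }
  specialize (Hadd E HE HEdisj).
  rewrite (P_ext _ (fun om => exists n, E n om)).
  - apply (uniqueness_sum _ _ _ Hadd). intros eps Heps. exists 1. intros n Hn.
    replace (sum_f_R0 (fun n => P (E n)) n) with (P A + P B)%R.
    + unfold R_dist. rewrite Rminus_diag, Rabs_R0. auto.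
    + destruct n as [|n]; [lia|]. clear Hn. induction n as [|n IH]; auto.
      simpl sum_f_R0 in *. rewrite <- IH. simpl. rewrite P_empty. ring.
  - intros om; split.
    + intros [H|H]; [exists 0 | exists 1]; auto.
    + intros [[|[|n]] H]; simpl in H; tauto.
Qed.

Lemma P_union_le A B : measurable A -> measurable B ->
  (P (fun om => A om \/ B om) <= P A + P B)%R.
Proof.
  intros HA HB. pose proof HP as [_ [Hpos _]].
  assert (HnA : measurable (fun om => ~ A om)) by (apply sigma_algebra_measurable; auto).
  assert (HBnA : measurable (fun om => B om /\ ~ A om))
    by (apply sigma_algebra_inter; auto using sigma_algebra_measurable).
  assert (HAB : measurable (fun om => B om /\ A om))
    by (apply sigma_algebra_inter; auto using sigma_algebra_measurable).
  rewrite (P_ext _ (fun om => A om \/ (B om /\ ~ A om))) by (intros; tauto).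
  rewrite (P_ext B (fun om => (B om /\ ~ A om) \/ (B om /\ A om))) by (intros; tauto).
  rewrite !P_disjoint_union by (auto; intros om; tauto).
  pose proof (Hpos _ HAB). lra.
Qed.

Lemma null_union A B : null P A -> null P B -> null P (fun om => A om \/ B om).
Proof.
  intros [HA PA] [HB PB]. pose proof HP as [_ [Hpos _]].
  assert (HAB : measurable (fun om => A om \/ B om))
    by (apply sigma_algebra_union; auto using sigma_algebra_measurable).
  split; auto. pose proof (P_union_le A B HA HB). pose proof (Hpos _ HAB). lra.
Qed.

Lemma null_list_union {X : Type} (A : X -> Omega0 adj -> Prop) (l : list X) :
  (forall x, In x l -> null P (A x)) -> null P (fun om => exists x, In x l /\ A x om).
Proof.
  induction l as [|a l IH]; intros Hl.
  - apply (pred_ext_subst (null P) (fun _ => False)); [|firstorder].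
    split; [apply sigma_algebra_empty, sigma_algebra_measurable | apply P_empty].
  - apply (pred_ext_subst (null P) (fun om => A a om \/ exists x, In x l /\ A x om)).
    + apply null_union; [apply Hl; now left | apply IH; intros; apply Hl; now right].
    + intros om; split.
      * intros [x [[<-|Hx] HA]]; [left | right; exists x]; auto.
      * intros [HA|[x [Hx HA]]]; [exists a | exists x]; simpl; auto.
Qed.

End Probability.

Lemma U_length_le {V : Type} (eqdec : forall x y : V, {x = y} + {x <> y}) {adj : V -> V -> Prop}
  (odot : list V -> V -> Pref adj -> list V) (Hadm : admissible eqdec odot)
  (nu : Pref adj -> R) (Hsub : sub_additive odot nu) s0 Y n om :
  in_supp nu s0 -> inW eqdec adj (Y om) -> all_in_supp nu (prefs om 0 n) ->
  length (U odot Y n om) <= length (Y om) + length (U odot (fun _ => []) n om).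
Proof.
  intros Hs0 HY Hsupp. rewrite !U_Qphi_from.
  apply (Qphi_from_length_le eqdec odot Hadm nu Hsub s0); auto.
  now rewrite length_letters, length_prefs.
Qed.

Section Support.
Context {V : Type} {adj : V -> V -> Prop} (P : (Omega0 adj -> Prop) -> R).
Hypothesis HP : probability P.

Lemma null_coord_outside_support {X : Type} (f : coord adj -> X) (g : X -> R) (k : Z) :
  Finite X -> Finite (coord adj) ->
  (forall x, P (fun om => f (om k) = x) = g x) ->
  null P (fun om => ~ (0 < g (f (om k)))%R).
Proof.
  intros [lx Hlx] Hcoord Hmarg. pose proof HP as [_ [Hpos _]].
  apply (pred_ext_subst (null P) (fun om => exists x, In x lx /\ (f (om k) = x /\ ~ (0 < g x)%R))).
  - apply null_list_union; auto. intros x _.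
    split; [apply (measurable_coord k (fun c => f c = x /\ ~ (0 < g x)%R)); auto |].
    destruct (classic (0 < g x)%R) as [Hgx|Hgx].
    + rewrite (P_ext P _ (fun _ => False)) by tauto. now apply P_empty.
    + rewrite (P_ext P _ (fun om => f (om k) = x)) by tauto.
      pose proof (Hpos _ (measurable_coord k (fun c => f c = x) Hcoord)) as Hge.
      cbv beta in Hge. rewrite Hmarg in *. lra.
  - intros om; split.
    + intros Hg. exists (f (om k)). auto.
    + now intros [x [_ [-> Hg]]].
Qed.

End Support.

Definition unsupported_before {V : Type} {adj : V -> V -> Prop} (nu : Pref adj -> R) (K : nat)
  (om : Omega0 adj) : Prop :=
  exists k, In k (seq 0 K) /\
    (~ in_supp nu (cS0 (om (Z.of_nat k))) \/ ~ in_supp nu (cS1 (om (Z.of_nat k)))).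

Lemma null_unsupported_before {V : Type} (eqdec : forall x y : V, {x = y} + {x <> y})
  {adj : V -> V -> Prop} P mu0 mu1 (nu : Pref adj -> R) K :
  Finite V -> H1' P mu0 mu1 nu -> null P (unsupported_before nu K).
Proof.
  intros HV [HP [_ [_ [_ [_ [Hnu0 [Hnu1 _]]]]]]].
  pose proof (Finite_Pref eqdec adj HV) as HPref.
  pose proof (Finite_coord adj HV HPref) as Hcoord.
  apply null_list_union; auto. intros k _.
  apply null_union; auto; apply null_coord_outside_support; auto.
Qed.

Lemma prefs_in_supp {V : Type} {adj : V -> V -> Prop} (nu : Pref adj -> R) K om :
  ~ unsupported_before nu K om -> all_in_supp nu (prefs om 0 K).
Proof.
  intros Hgood s Hs. unfold prefs in Hs. apply in_flat_map in Hs as [k [Hk Hs]].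
  unfold Sg0, Sg1 in Hs. rewrite !thetan_coord in Hs.
  apply NNPP. intros Hns. apply Hgood. exists k. split; auto.
  destruct Hs as [<-|[<-|[]]]; auto.
Qed.

Theorem mainTheorem13
  (V : Type) (eqdec : forall x y : V, {x = y} + {x <> y}) (adj : V -> V -> Prop)
  (HG : simple_finite_connected_graph adj)
  (odot : list V -> V -> Pref adj -> list V) (nu : Pref adj -> R)
  (P : (Omega0 adj -> Prop) -> R) (mu0 mu1 : V -> R)
  (HH : H1' P mu0 mu1 nu)
  (Hadm : admissible eqdec odot)
  (Hsub : sub_additive odot nu)
  (r : nat) (Hr : (1 <= r)%nat)
  (zs : list (list V)) (Hzs_len : length zs = r)
  (Hzs : forall z, In z zs -> strong_erasing odot nu z) :
  forall (Y : Omega0 adj -> list V), in_Y2r eqdec P r Y ->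
  forall n : nat, (1 <= n)%nat ->
    subset_ae P (Cev odot zs n) (Aev odot Y (n + half_total_length zs)).
Proof.
  intros Y [_ [HYW [NY [HNY HYlen]]]] n Hn.
  destruct HG as [HV [Hsym [Hirr _]]].
  set (m := half_total_length zs).
  exists (fun om => NY om \/ unsupported_before nu (n + m) om). split.
  { apply null_union; [apply HH | auto | apply (null_unsupported_before eqdec P mu0 mu1); auto]. }
  intros om [HA HB] Hgood. fold m in HB.
  assert (Hsupp : all_in_supp nu (prefs om 0 (n + m))) by (apply prefs_in_supp; tauto).
  rewrite prefs_add in Hsupp. apply all_in_supp_app in Hsupp as [Hsupp_n Hsupp_m].
  (* The only use of [n >= 1]: some preference list in the support of [nu]. *)
  assert (Hs0 : in_supp nu (Sg0 om)).
  { apply Hsupp_n. destruct n as [|n']; [lia | now left]. }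
  unfold Aev. rewrite U_add, (Bev_letters _ _ _ _ HB).
  apply (concat_strong_erasing_erases eqdec odot Hadm Hsym Hirr nu Hsub (Sg0 om)); auto.
  - apply U_inW2; auto.
  - eapply Nat.le_trans; [apply (U_length_le eqdec odot Hadm nu Hsub (Sg0 om)); auto; apply HYW|].
    unfold Aev in HA. rewrite HA, Nat.add_0_r, Hzs_len. apply HYlen. tauto.
  - now rewrite <- (Bev_letters _ _ _ _ HB), length_letters, length_prefs.
Qed.
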